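(* Let $F$ be a field and $T_3$ the ring of lower triangular $3\times3$ matrices over $F$. Two pairs $(x,y),(w,z)\in T_3^2$ each generating a free cyclic submodule lie in the same $GL_2(T_3)$-orbit (under right multiplication) if and only if the right ideals $xT_3+yT_3$ and $wT_3+zT_3$ coincide.
   Context: Rings are associative with identity. $T_3^2$ is the free left $T_3$-module of pairs; for $(a,b)$, $T_3(a,b)=\{(\alpha a,\alpha b):\alpha\in T_3\}$ is free if $r(a,b)=(0,0)$ implies $r=0$. $GL_2(T_3)$ acts on pairs by right multiplication of the row vector $(a,b)$ by an invertible $2\times2$ matrix over $T_3$. *)

From HB Require Import structures.
From mathcomp Require Import all_boot all_order all_algebra.
Set Implicit Arguments. Unset Strict Implicit. Unset Printing Implicit Defensive.
Import GRing.Theory.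
Local Open Scope ring_scope.

(* T_3: lower triangular 3x3 matrices over F, as a subset of the ring 'M[F]_3.
   is_trig_mx A <=> forall i j, i < j -> A i j = 0 (lower triangular). *)
Definition inT3 (F : fieldType) (A : 'M[F]_3) : bool := is_trig_mx A.

Definition pairrow (F : fieldType) (a b : 'M[F]_3) : 'rV['M[F]_3]_2 :=
  \row_(j < 2) (if j == ord0 then a else b).

Definition free_pair (F : fieldType) (a b : 'M[F]_3) : Prop :=
  forall r : 'M[F]_3, inT3 r -> r * a = 0 -> r * b = 0 -> r = 0.

Definition matT3 (F : fieldType) (P : 'M['M[F]_3]_2) : Prop :=
  forall i j, inT3 (P i j).

Definition inGL2T3 (F : fieldType) (P : 'M['M[F]_3]_2) : Prop :=
  matT3 P /\ exists Q : 'M['M[F]_3]_2, matT3 Q /\ P *m Q = 1%:M /\ Q *m P = 1%:M.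

Definition same_orbit (F : fieldType) (a b c d : 'M[F]_3) : Prop :=
  exists P, inGL2T3 P /\ pairrow a b *m P = pairrow c d.

Definition in_rideal (F : fieldType) (a b m : 'M[F]_3) : Prop :=
  exists s t : 'M[F]_3, inT3 s /\ inT3 t /\ m = a * s + b * t.

(* If (x,y)S = (w,z) and (w,z)T = (x,y) with S, T over T_3, then C = 1 - ST
   annihilates (x,y), so (x,y)(S + CY) = (w,z) for every Y.  The three diagonal
   projections T_3 -> F are ring maps whose joint kernel, the strictly lower
   triangular matrices, is nilpotent; hence a 2x2 matrix over T_3 is invertible
   as soon as its three images in M_2(F) are.  As M_2(F) has stable range one,
   Y can be chosen with S + CY invertible. *)

From HB Require Import structures.
From mathcomp Require Import all_boot all_order all_algebra.
From mathcomp Require Import ring zify.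
Set Implicit Arguments. Unset Strict Implicit. Unset Printing Implicit Defensive.
Import GRing.Theory.
Local Open Scope ring_scope.

Lemma nil3_inv_1D (R : pzRingType) (n : R) : n * n * n = 0 ->
  (1 + n) * (1 - n + n * n) = 1 /\ (1 - n + n * n) * (1 + n) = 1.
Proof.
move=> n3; split.
  rewrite mulrDl mul1r !mulrDr mulrN mulr1 mulrA n3 addr0.
  by rewrite addrACA subrK subrr addr0.
rewrite mulrDr mulr1 !mulrDl mul1r mulNr n3 addr0.
by rewrite addrACA subrK subrr addr0.
Qed.

Lemma det_mx2 (R : comPzRingType) (A : 'M[R]_2) :
  \det A = A 0 0 * A 1 1 - A 0 1 * A 1 0.
Proof.
rewrite (expand_det_row _ 0) !big_ord_recl big_ord0 /cofactor !det_mx11 !mxE /=.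
rewrite expr0 expr1 mul1r mulN1r mulrN addr0.
by congr (A _ _ * A _ _ - A _ _ * A _ _); apply: val_inj.
Qed.

Lemma mx2_stable_range1 (F : fieldType) (A B : 'M[F]_2) :
  exists Y, A + (1 - A *m B) *m Y \in unitmx.
Proof.
pose d Y := \det (A + (1 - A *m B) *m Y).
pose dD i j := d (delta_mx i j) - d 0.
(* d is affine in each column of Y, and this combination of six of its values
   is identically 1. *)
have d_comb : 1 = \det B * d 0 + B 0 0 * dD 1 1 - B 1 0 * dD 1 0
    - B 0 1 * dD 0 1 + B 1 1 * dD 0 0 + (d 1 - d 0 - dD 1 1 - dD 0 0).
  have e0 : ord0 = 0 :> 'I_2 by apply: val_inj.
  have e1 : lift ord0 ord0 = 1 :> 'I_2 by apply: val_inj.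
  rewrite /dD /d !det_mx2 !mxE !big_ord_recl !big_ord0 !mxE /= ?e0 ?e1.
  rewrite !big_ord_recl !big_ord0 /= ?e0 ?e1.
  ring.
suff /hasP[Y _ dY] : has (fun Y => d Y != 0)
    [:: 0; 1; delta_mx 0 0; delta_mx 0 1; delta_mx 1 0; delta_mx 1 1].
  by exists Y; rewrite unitmxE unitfE.
apply: contraT; rewrite -all_predC /= !negbK.
case/and5P=> /eqP d0 /eqP d1 /eqP d00 /eqP d01 /andP[/eqP d10 /andP[/eqP d11 _]].
move: d_comb; rewrite /dD d0 d1 d00 d01 d10 d11 !(subrr, mulr0, addr0, subr0).
by move/eqP; rewrite oner_eq0.
Qed.

Lemma is_trig_mxD (V : nmodType) m n (A B : 'M[V]_(m, n)) :
  is_trig_mx A -> is_trig_mx B -> is_trig_mx (A + B).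
Proof.
move=> /is_trig_mxP A0 /is_trig_mxP B0; apply/is_trig_mxP => i j lt_ij.
by rewrite mxE A0 // B0 // addr0.
Qed.

Lemma is_trig_mxN (V : zmodType) m n (A : 'M[V]_(m, n)) :
  is_trig_mx A -> is_trig_mx (- A).
Proof.
by move=> /is_trig_mxP A0; apply/is_trig_mxP => i j lt_ij; rewrite mxE A0 ?oppr0.
Qed.

Lemma is_trig_mulmx (R : pzSemiRingType) m n p
    (A : 'M[R]_(m, n)) (B : 'M[R]_(n, p)) :
  is_trig_mx A -> is_trig_mx B -> is_trig_mx (A *m B).
Proof.
move=> /is_trig_mxP A0 /is_trig_mxP B0; apply/is_trig_mxP => i j lt_ij.
rewrite mxE big1 // => l _; case: (ltnP i l) => [lt_il|le_li].
  by rewrite A0 ?mul0r.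
by rewrite B0 ?mulr0 // (leq_ltn_trans le_li lt_ij).
Qed.

Lemma trig_mulmx_diag (R : pzSemiRingType) n (A B : 'M[R]_n) (k : 'I_n) :
  is_trig_mx A -> is_trig_mx B -> (A *m B) k k = A k k * B k k.
Proof.
move=> /is_trig_mxP A0 /is_trig_mxP B0.
rewrite mxE (bigD1 k) //= big1 ?addr0 // => l ne_lk.
case: (ltngtP k l) => [lt_kl|lt_lk|eq_kl]; first by rewrite A0 ?mul0r.
  by rewrite B0 ?mulr0.
by case/eqP: ne_lk; apply: val_inj.
Qed.

Lemma strictly_trig3_mul_eq0 (R : pzSemiRingType) (A B C : 'M[R]_3) :
  (forall i j : 'I_3, (i <= j)%N -> A i j = 0) ->
  (forall i j : 'I_3, (i <= j)%N -> B i j = 0) ->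
  (forall i j : 'I_3, (i <= j)%N -> C i j = 0) ->
  A *m B *m C = 0.
Proof.
move=> A0 B0 C0; apply/matrixP => i j; rewrite !mxE big1 // => m _.
rewrite mxE big_distrl big1 //= => l _.
case: (leqP i l) => [le_il|lt_li]; first by rewrite A0 // !mul0r.
case: (leqP l m) => [le_lm|lt_ml]; first by rewrite B0 // mulr0 mul0r.
rewrite C0 ?mulr0 //; have := ltn_ord i; lia.
Qed.

Section TriangularBlocks.
Variable F : fieldType.
Implicit Types (P Q S T N : 'M['M[F]_3]_2) (a b c d : 'M[F]_3).

Lemma matT3D P Q : matT3 P -> matT3 Q -> matT3 (P + Q).
Proof. by move=> hP hQ i j; rewrite mxE; exact: is_trig_mxD (hP i j) (hQ i j). Qed.

Lemma matT3N P : matT3 P -> matT3 (- P).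
Proof. by move=> hP i j; rewrite mxE; exact: is_trig_mxN (hP i j). Qed.

Lemma matT3M P Q : matT3 P -> matT3 Q -> matT3 (P *m Q).
Proof.
move=> hP hQ i j; rewrite mxE; apply: (big_ind (@inT3 F)).
- exact: mx0_is_trig.
- exact: is_trig_mxD.
- by move=> l _; exact: is_trig_mulmx (hP i l) (hQ l j).
Qed.

Lemma matT3_1 : matT3 (1 : 'M['M[F]_3]_2).
Proof.
move=> i j; rewrite mxE.
by case: (i == j); [apply: scalar_mx_is_trig | apply: mx0_is_trig].
Qed.

Lemma matT3B1 P Q : matT3 P -> matT3 Q -> matT3 (1 - P *m Q).
Proof. by move=> hP hQ; apply: matT3D; [exact: matT3_1 | exact/matT3N/matT3M]. Qed.

Definition proj_diag (k : 'I_3) P : 'M[F]_2 := \matrix_(i, j) P i j k k.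

Definition diag_lift (Y : 'I_3 -> 'M[F]_2) : 'M['M[F]_3]_2 :=
  \matrix_(i, j) diag_mx (\row_k Y k i j).

Lemma proj_diagD k P Q : proj_diag k (P + Q) = proj_diag k P + proj_diag k Q.
Proof. by apply/matrixP => i j; rewrite !mxE. Qed.

Lemma proj_diagN k P : proj_diag k (- P) = - proj_diag k P.
Proof. by apply/matrixP => i j; rewrite !mxE. Qed.

Lemma proj_diag1 k : proj_diag k 1 = 1.
Proof. by apply/matrixP => i j; rewrite !mxE; case: (i == j); rewrite !mxE ?eqxx. Qed.

Lemma proj_diagM k P Q : matT3 P -> matT3 Q ->
  proj_diag k (P *m Q) = proj_diag k P *m proj_diag k Q.
Proof.
move=> hP hQ; apply/matrixP => i j; rewrite !mxE summxE.
by apply: eq_bigr => l _; rewrite (trig_mulmx_diag k (hP i l) (hQ l j)) !mxE.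
Qed.

Lemma proj_diagB1 k P Q : matT3 P -> matT3 Q ->
  proj_diag k (1 - P *m Q) = 1 - proj_diag k P *m proj_diag k Q.
Proof. by move=> hP hQ; rewrite proj_diagD proj_diagN proj_diag1 proj_diagM. Qed.

Lemma matT3_diag_lift Y : matT3 (diag_lift Y).
Proof. by move=> i j; rewrite mxE; apply: diag_mx_is_trig. Qed.

Lemma proj_diag_lift Y k : proj_diag k (diag_lift Y) = Y k.
Proof. by apply/matrixP => i j; rewrite !mxE eqxx mulr1n. Qed.

Lemma proj_diag_eq0_nil3 N : matT3 N -> (forall k, proj_diag k N = 0) ->
  N * N * N = 0.
Proof.
move=> hN N0.
have strict i j (r s : 'I_3) : (r <= s)%N -> N i j r s = 0.
  rewrite leq_eqVlt => /orP[/eqP/val_inj <-|lt_rs].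
    by have /matrixP/(_ i j) := N0 r; rewrite !mxE.
  exact: is_trig_mxP (hN i j) r s lt_rs.
apply/matrixP => i j; rewrite !mxE big1 // => l _.
rewrite mxE big_distrl big1 //= => m _.
by apply: strictly_trig3_mul_eq0; apply: strict.
Qed.

Lemma unipotent_invertible N : matT3 N -> (forall k, proj_diag k N = 1) ->
  exists2 N', matT3 N' & N * N' = 1 /\ N' * N = 1.
Proof.
move=> hN N1; pose n := N - 1.
have hn : matT3 n by apply: matT3D; [exact: hN | exact/matT3N/matT3_1].
have n3 : n * n * n = 0.
  apply: proj_diag_eq0_nil3 => // k.
  by rewrite proj_diagD proj_diagN proj_diag1 N1 subrr.
exists (1 - n + n * n).
  apply: matT3D; last exact: matT3M.
  by apply: matT3D; [exact: matT3_1 | exact: matT3N].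
by have := nil3_inv_1D n3; rewrite /n addrC subrK.
Qed.

Lemma inGL2T3_proj_diag P : matT3 P -> (forall k, proj_diag k P \in unitmx) ->
  inGL2T3 P.
Proof.
move=> hP Pu; pose Q := diag_lift (fun k => invmx (proj_diag k P)).
have hQ : matT3 Q := matT3_diag_lift _.
have [R hR [PQR _]] : exists2 R, matT3 R & P * Q * R = 1 /\ R * (P * Q) = 1.
  apply: unipotent_invertible; first exact: matT3M.
  by move=> k; rewrite proj_diagM // proj_diag_lift mulmxV.
have [L _ [_ LQP]] : exists2 L, matT3 L & Q * P * L = 1 /\ L * (Q * P) = 1.
  apply: unipotent_invertible; first exact: matT3M.
  by move=> k; rewrite proj_diagM // proj_diag_lift mulVmx.
have LQ_QR : L * Q = Q * R.
  by rewrite -[L * Q]mulr1 -PQR !mulrA -(mulrA L) LQP mul1r.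
split=> //; exists (Q * R); split; first exact: matT3M.
by split; [rewrite mulmxA; exact: PQR | rewrite -LQ_QR -mulmxA; exact: LQP].
Qed.

Lemma pairrow_mulmx a b P :
  pairrow a b *m P = pairrow (a * P 0 0 + b * P 1 0) (a * P 0 1 + b * P 1 1).
Proof.
apply/matrixP => i j; rewrite !mxE !big_ord_recl big_ord0 !mxE /= addr0.
by case: j => [[|[|//]] ?]; congr (a * P _ _ + b * P _ _); apply: val_inj.
Qed.

Lemma pairrow_inj a b c d : pairrow a b = pairrow c d -> a = c /\ b = d.
Proof. by move=> /matrixP e; move: (e 0 0) (e 0 1); rewrite !mxE. Qed.

Lemma in_rideal_l a b : in_rideal a b a.
Proof. by exists 1, 0; rewrite /inT3 mulr1 mulr0 addr0 mx0_is_trig scalar_mx_is_trig. Qed.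

Lemma in_rideal_r a b : in_rideal a b b.
Proof. by exists 0, 1; rewrite /inT3 mulr1 mulr0 add0r mx0_is_trig scalar_mx_is_trig. Qed.

Lemma in_rideal_mulmx a b c d P : matT3 P -> pairrow a b *m P = pairrow c d ->
  forall m, in_rideal c d m -> in_rideal a b m.
Proof.
move=> hP; rewrite pairrow_mulmx => /pairrow_inj[<- <-] m [s [t [hs [ht ->]]]].
exists (P 0 0 * s + P 0 1 * t), (P 1 0 * s + P 1 1 * t).
split; first exact: is_trig_mxD (is_trig_mulmx (hP 0 0) hs) (is_trig_mulmx (hP 0 1) ht).
split; first exact: is_trig_mxD (is_trig_mulmx (hP 1 0) hs) (is_trig_mulmx (hP 1 1) ht).
by rewrite !mulrDl -!mulrA !mulrDr addrACA.
Qed.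

Lemma in_rideal_pairrow a b c d : in_rideal a b c -> in_rideal a b d ->
  exists2 S, matT3 S & pairrow a b *m S = pairrow c d.
Proof.
move=> [s1 [t1 [hs1 [ht1 ->]]]] [s2 [t2 [hs2 [ht2 ->]]]].
exists (\matrix_(i, j) if i == 0 then (if j == 0 then s1 else s2)
                       else (if j == 0 then t1 else t2)).
  by move=> i j; rewrite mxE; case: (i == 0); case: (j == 0).
by rewrite pairrow_mulmx !mxE.
Qed.

Lemma same_orbit_of_mulmx a b c d S T : matT3 S -> matT3 T ->
  pairrow a b *m S = pairrow c d -> pairrow c d *m T = pairrow a b ->
  same_orbit a b c d.
Proof.
move=> hS hT abS cdT; pose C := 1 - S *m T.
have abC : pairrow a b *m C = 0 by rewrite mulmxBr mulmx1 mulmxA abS cdT subrr.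
have /fin_all_exists[Y Yu] k : exists Y,
    proj_diag k S + (1 - proj_diag k S *m proj_diag k T) *m Y \in unitmx.
  exact: mx2_stable_range1.
have hC : matT3 C := matT3B1 hS hT.
have hY : matT3 (diag_lift Y) := matT3_diag_lift Y.
exists (S + C *m diag_lift Y); split; last by rewrite mulmxDr mulmxA abC mul0mx addr0.
apply: inGL2T3_proj_diag => [|k]; first exact: matT3D hS (matT3M hC hY).
by rewrite proj_diagD proj_diagM // proj_diag_lift proj_diagB1.
Qed.

End TriangularBlocks.

Theorem mainTheorem9 (F : fieldType) (x y w z : 'M[F]_3) :
  inT3 x -> inT3 y -> inT3 w -> inT3 z ->
  free_pair x y -> free_pair w z ->
  (same_orbit x y w z <->
   (forall m : 'M[F]_3, inT3 m -> (in_rideal x y m <-> in_rideal w z m))).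
Proof.
move=> hx hy hw hz _ _; split.
  move=> [P [[hP [Q [hQ [PQ _]]]] xyP]] m _.
  split; last exact: in_rideal_mulmx hP xyP m.
  by apply: in_rideal_mulmx hQ _ m; rewrite -xyP -mulmxA PQ mulmx1.
move=> eq_ideals.
have [S hS xyS] := in_rideal_pairrow ((eq_ideals w hw).2 (in_rideal_l w z))
                                      ((eq_ideals z hz).2 (in_rideal_r w z)).
have [T hT wzT] := in_rideal_pairrow ((eq_ideals x hx).1 (in_rideal_l x y))
                                      ((eq_ideals y hy).1 (in_rideal_r x y)).
exact: same_orbit_of_mulmx hS hT xyS wzT.
Qed.
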